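(* Let $p\in[1,\infty)$ and $\rho\in\mathfrak M_+(\mathsf X\times\mathsf X)$. Let $E_0\subseteq\mathsf X$ be $\mathfrak m$-measurable, $(\mathsf Y,\mathsf d_{\mathsf Y})$ a metric space, $f\in\mathfrak M(E_0,\mathsf Y)$, and $E\Subset E_0$ $\mathfrak m$-measurable. Suppose there is $R>0$ with $\mathrm B(E,R)\subseteq E_0$ and a function $G:E_0\times(0,R]\to[0,+\infty]$ such that: (i) for every $r\in(0,R]$, $G(\cdot,r)$ is $\mathfrak m$-measurable; (ii) there is $C>0$ such that for every $r\in(0,R]$, for $\mathfrak m$-a.e. $x\in E_0$, $\sup_{r'\in[r/2,r]}G(x,r')\le C\,G(x,r)$; (iii) there is $D\subseteq E_0\times E_0$ with $(\mathfrak m\otimes\mathfrak m)((E_0\times E_0)\setminus D)=0$ such that for all $(x,x')\in D$ with $x\in E$ and $x'\in\mathrm B(x,R)\setminus\{x\}$, $(\mathsf Q_f(x,x'))^p\le G(x,\mathsf d(x,x'))+G(x',\mathsf d(x,x'))$. Then for every $r\in(0,R]$, \[ \int_E\int_{\mathrm B(x,r)}(\mathsf Q_f(x,x'))^p\rho(x,x')\,\mathrm d\mathfrak m(x')\,\mathrm d\mathfrak m(x)\le C\,\mathcal I^U_{E,r}[\rho]\sup_{r'\in(0,r]}\int_{E_0}G(x,r')\,\mathrm d\mathfrak m(x). \]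
   Context: $(\mathsf X,\mathsf d)$ is a locally complete separable metric space of positive diameter with a locally finite Borel outer measure $\mathfrak m$, $\mathfrak m(\mathsf X)>0$. Conventions $0\cdot(+\infty)=0/0=0$. Closed balls $\mathrm B(x,r)=\{x':\mathsf d(x,x')\le r\}$, $\mathrm B(S,r)=\{x':\operatorname{dist}(S,\{x'\})\le r\}$; $\mathrm A(x,\tau)=\{x':\mathsf d(x,x')\in\tau\}$. $S\Subset S_0$ means $S\subseteq S_0$ and $\operatorname{dist}(S,\mathsf X\setminus S_0)>0$. $\mathfrak M(E,\mathsf Y)$: $\mathfrak m$-measurable maps $E\to\mathsf Y$ separably valued off an $\mathfrak m$-null set. $\mathfrak M_+(\mathsf X\times\mathsf X)$: $(\mathfrak m\otimes\mathfrak m)$-measurable functions into $[0,+\infty]$. $\mathsf Q_f(x,x')=\mathsf d_{\mathsf Y}(f(x),f(x'))/\mathsf d(x,x')$ for $x\ne x'$, $0$ for $x=x'$. For $r>0$, $\mathcal P^U_r$ is the set of sequences $(\tau_k)_{k\in\mathbb N_0}$ of nonempty intervals in $(0,r]$ with $\sup\tau_k\le2\inf\tau_k$ and $(0,r]\subseteq\bigcup_k\tau_k$; for $S\subseteq\mathsf X$, $\mathcal I^U_{S,r}[\rho,\tau_\bullet]=\sum_k\operatorname{ess\,sup}_{x\in\mathrm B(S,\sup\tau_k)}\int_{\mathrm A(x,\tau_k)}(\rho(x,x')+\rho(x',x))\,\mathrm d\mathfrak m(x')$ (ess sup w.r.t. $\mathfrak m$) and $\mathcal I^U_{S,r}[\rho]=\inf_{\tau_\bullet\in\mathcal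 P^U_r}\mathcal I^U_{S,r}[\rho,\tau_\bullet]$. *)

From HB Require Import structures.
From mathcomp Require Import all_boot all_order all_algebra.
From mathcomp Require Import all_classical all_reals all_analysis.
From mathcomp Require Import measurable_realfun.

Import Order.TTheory GRing.Theory Num.Theory.
Import numFieldNormedType.Exports.

Local Open Scope classical_set_scope.
Local Open Scope ring_scope.

Section metric_defs.
Context {R : realType} {T : Type}.

Record is_metric (dist : T -> T -> R) : Prop := IsMetric {
  metric_ge0 : forall x y, 0 <= dist x y;
  metric_eq0 : forall x y, dist x y = 0 <-> x = y;
  dmetric_sym : forall x y, dist x y = dist y x;
  metric_tri : forall x y z, dist x z <= dist x y + dist y z }.

Variable dist : T -> T -> R.

Definition dopen (U : set T) : Prop :=
  forall x, U x -> exists e : R, 0 < e /\ [set y | dist x y < e] `<=` U.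

Definition cball (x : T) (r : R) : set T := [set y | dist x y <= r].

(** dist(S,{x}) in [0,+oo] (= +oo when S is empty) *)
Definition dist_set (S : set T) (x : T) : \bar R :=
  ereal_inf [set (dist s x)%:E | s in S].

Definition cballS (S : set T) (r : R) : set T :=
  [set x | (dist_set S x <= r%:E)%E].

Definition annulus (x : T) (tau : set R) : set T := [set y | tau (dist x y)].

Definition dist_sets (S1 S2 : set T) : \bar R :=
  ereal_inf [set (dist a b)%:E | a in S1 & b in S2].

Definition relcompact_in (S S0 : set T) : Prop :=
  S `<=` S0 /\ (0%:E < dist_sets S (~` S0))%E.

Definition dcauchy (u : nat -> T) : Prop :=
  forall e : R, 0 < e -> exists N, forall n k, (N <= n)%N -> (N <= k)%N ->
    dist (u n) (u k) < e.

Definition dconverges (u : nat -> T) (l : T) : Prop :=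
  forall e : R, 0 < e -> exists N, forall n, (N <= n)%N -> dist (u n) l < e.

Definition locally_complete : Prop :=
  forall x, exists r : R, 0 < r /\
    forall u : nat -> T, (forall n, cball x r (u n)) -> dcauchy u ->
      exists l, cball x r l /\ dconverges u l.

Definition separable_set (S : set T) : Prop :=
  exists s : nat -> T, forall x, S x ->
    forall e : R, 0 < e -> exists n, dist x (s n) < e.

Definition positive_diameter : Prop := exists x y, 0 < dist x y.

End metric_defs.

Definition is_interval_set {R : realType} (t : set R) : Prop :=
  t !=set0 /\ forall a b c, t a -> t b -> a <= c <= b -> t c.

Definition PU {R : realType} (r : R) (tau : nat -> set R) : Prop :=
  (forall k, [/\ is_interval_set (tau k), tau k `<=` `]0, r] &
                 sup (tau k) <= 2 * inf (tau k)]) /\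
  `]0, r] `<=` \bigcup_k tau k.

Section measure_defs.
Context {R : realType} {T : pointedType}.
Variable m : {outer_measure set T -> \bar R}.

Definition cmeas : set (caratheodory_type m) -> \bar R := m.

Definition mmeasurable (A : set T) : Prop :=
  measurable (A : set (caratheodory_type m)).

Definition prod_null (A : set (T * T)) : Prop :=
  exists N : set (caratheodory_type m * caratheodory_type m),
    [/\ measurable N, A `<=` N & (cmeas \x cmeas)%E N = 0%E].

(** M_+(X × X): (m ⊗ m)-measurable [0,+oo]-valued functions
    (measurable for the completion of the product sigma-algebra) *)
Definition MplusXX (rho : T -> T -> \bar R) : Prop :=
  (forall x y, (0 <= rho x y)%E) /\
  exists g : caratheodory_type m * caratheodory_type m -> \bar R,
    measurable_fun setT g /\
    prod_null [set z | rho z.1 z.2 <> g z].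

Definition Mmaps {Y : Type} (dY : Y -> Y -> R) (E : set T) (f : T -> Y) : Prop :=
  (forall U : set Y, dopen dY U -> mmeasurable (E `&` f @^-1` U)) /\
  exists N : set T, m N = 0%E /\ separable_set dY (f @` (E `\` N)).

Definition esssup_on (A : set T) (h : T -> \bar R) : \bar R :=
  ereal_inf [set t | (0 <= t)%E /\ m [set x | A x /\ (t < h x)%E] = 0%E].

Variable dX : T -> T -> R.

Definition IU_tau (S : set T) (rho : T -> T -> \bar R) (tau : nat -> set R)
  : \bar R :=
  (\sum_(k <oo) esssup_on (cballS dX S (sup (tau k)))
     (fun x => \int[cmeas]_(x' in annulus dX x (tau k)) (rho x x' + rho x' x)))%E.

Definition IU (S : set T) (r : R) (rho : T -> T -> \bar R) : \bar R :=
  ereal_inf [set IU_tau S rho tau | tau in PU r].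

End measure_defs.

Definition Qf {R : realType} {T Y : Type} (dX : T -> T -> R) (dY : Y -> Y -> R)
  (f : T -> Y) (x x' : T) : R :=
  if `[< x = x' >] then 0 else dY (f x) (f x') / dX x x'.

(* Fix an admissible sequence [tau] and put [r_k = sup tau_k]. When
   [d(x,y)] lies in [tau_k] we have [r_k/2 <= d(x,y) <= r_k], so (ii) and (iii)
   give [Q_f(x,y)^p <= C (G(x,r_k) + G(y,r_k))]. Multiply by [rho(x,y)] and
   integrate over [x in E]: Tonelli's theorem moves the [G(y,r_k)] term onto the
   other variable, and the contribution of [tau_k] is at most [C] times the
   essential supremum over [B(E,r_k)] of the annular mass
   [\int_(A(x,tau_k)) (rho(x,.) + rho(.,x))] times [\int_E0 G(.,r_k)]. Summing
   over [k] and taking the infimum over [tau] gives the bound. Because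
   [0 * +oo = 0], the case [I^U_(E,r)[rho] = 0] is treated apart: then
   [rho(x,.)] vanishes a.e. on [B(x,r) \ {x}] for a.e. [x in E].
   Since [rho] is only measurable for the completed product sigma-algebra, it is
   replaced by a measurable representative [g], which agrees with it on almost
   every section. *)

From HB Require Import structures.
From mathcomp Require Import all_boot all_order all_algebra.
From mathcomp Require Import all_classical all_reals all_analysis.
From mathcomp Require Import measurable_realfun.
From mathcomp Require Import lra.
Import Order.TTheory GRing.Theory Num.Theory.
Import numFieldNormedType.Exports.
Import HBNNSimple.
Local Open Scope classical_set_scope.
Local Open Scope ring_scope.

Lemma natSinv_lt {R : realType} {e : R} : 0 < e -> exists n : nat, n.+1%:R^-1 < e.
Proof.
move=> e0.
by have [N _ /(_ N (leqnn N))] := near_infty_natSinv_lt (PosNum e0); exists N.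
Qed.

Section ereal_lemmas.
Context {R : realType}.
Local Open Scope ereal_scope.

Lemma nneseries_ge_term {u : nat -> \bar R} n :
  (forall k, 0 <= u k) -> u n <= \sum_(k <oo) u k.
Proof.
by move=> u0; rewrite (@nneseriesD1 _ u n xpredT)// leeDl// nneseries_ge0.
Qed.

Lemma nneseriesMr_le {u : nat -> \bar R} {c : \bar R} :
  (forall k, 0 <= u k) -> 0 <= c ->
  \sum_(k <oo) (u k * c) <= (\sum_(k <oo) u k) * c.
Proof.
move=> u0; case: c => [s| |] // c0.
  under eq_eseriesr do rewrite muleC.
  by rewrite nneseriesZl// muleC.
have [u_eq0|u_neq0] := eqVneq (\sum_(k <oo) u k) 0.
  have uk k : u k = 0.
    by apply/eqP; rewrite eq_le u0 andbT -u_eq0 nneseries_ge_term.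
  under eq_eseriesr do rewrite uk mul0e.
  by rewrite eseries0// u_eq0 mul0e.
by rewrite muleC gt0_mulye ?leey// lt0e u_neq0 nneseries_ge0.
Qed.

(* With [K = +oo] the hypothesis for [ereal_inf A = 0] is needed, because
   [0 * +oo = 0]. *)
Lemma le_ereal_inf_mul (A : set (\bar R)) (L K : \bar R) :
  A !=set0 -> (forall a, A a -> 0 <= a) -> 0 <= K ->
  (forall a, A a -> L <= a * K) -> (ereal_inf A = 0 -> L <= 0) ->
  L <= ereal_inf A * K.
Proof.
move=> [a0 Aa0] A0 K0 LA LA0; case: K K0 LA => [k| |] // K0 LA.
  move: K0; rewrite lee_fin le_eqVlt => /orP[/eqP k0|k_gt0].
    by rewrite -k0 mule0; have := LA _ Aa0; rewrite -k0 mule0.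
  rewrite muleC -ereal_inf_pZl//; apply: le_ereal_inf_tmp => _ [a Aa <-].
  by rewrite muleC; exact: LA.
have inf0 : 0 <= ereal_inf A by apply: le_ereal_inf_tmp => a /A0.
have [inf_eq0|inf_neq0] := eqVneq (ereal_inf A) 0.
  by rewrite inf_eq0 mul0e; exact: LA0.
by rewrite gt0_muley ?leey// lt0e inf_neq0 inf0.
Qed.

End ereal_lemmas.

(* [F] need not be measurable: its integral is then the supremum of the
   integrals of the simple functions below it. *)
Lemma ae_ge0_le_integral_measr {d} {T : measurableType d} {R : realType}
  {mu : {measure set T -> \bar R}} {D : set T} {F Phi : T -> \bar R} :
  measurable D -> measurable_fun D Phi ->
  (forall x, D x -> (0 <= F x)%E) -> (forall x, D x -> (0 <= Phi x)%E) ->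
  {ae mu, forall x, D x -> (F x <= Phi x)%E} ->
  (\int[mu]_(x in D) F x <= \int[mu]_(x in D) Phi x)%E.
Proof.
move=> mD mPhi F0 Phi0 FPhi.
rewrite (ge0_integralE _ F0) (integral_mkcond D Phi).
apply: ge_ereal_sup => _ [h /= hF <-].
rewrite -integralT_nnsfun; apply: ae_ge0_le_integral => //.
- by move=> x _; rewrite lee_fin; exact: fun_ge0.
- by apply/measurable_EFinP; exact: measurable_funPT.
- by move=> x _; apply: erestrict_ge0.
- exact/(measurable_restrictT _ _).1.
apply: filterS FPhi => x FPhi _; have := hF x; rewrite !patchE.
by case: ifPn => // /set_mem Dx hx; apply: le_trans hx (FPhi Dx).
Qed.

Section caratheodory_null.
Context {R : realType} {T : pointedType} {m : {outer_measure set T -> \bar R}}.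
Local Notation U := (caratheodory_type m).
Local Notation mu := (m : set U -> \bar R).
Local Open Scope ereal_scope.

Lemma caratheodory_null_measurable (N : set U) : m N = 0 -> measurable N.
Proof.
move=> N0; apply: le_caratheodory_measurable => X.
have -> : m (X `&` N) = 0.
  apply/eqP; rewrite eq_le outer_measure_ge0 andbT -N0.
  by apply: le_outer_measure; exact: subIsetr.
by rewrite add0e; apply: le_outer_measure; exact: subIsetl.
Qed.

Lemma caratheodory_null_ae {N : set U} : m N = 0 -> {ae mu, forall x, ~ N x}.
Proof.
move=> N0; exists N; split => //; first exact: caratheodory_null_measurable.
by move=> x /= /contrapT.
Qed.

Lemma caratheodory_ae_eq_integral {D : set U} {F Phi : U -> \bar R} :
  measurable D -> measurable_fun D Phi ->
  {ae mu, forall x, D x -> Phi x = F x} ->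
  \int[mu]_(x in D) F x = \int[mu]_(x in D) Phi x.
Proof.
move=> mD mPhi PhiF.
have mF : measurable_fun D F.
  exact: (ae_measurable_fun (@measure_is_complete_caratheodory _ _ m) PhiF mPhi).
by apply: ae_eq_integral => //; apply: filterS PhiF => x PhiF /PhiF ->.
Qed.

Lemma esssup_on_ge0 (A : set U) (h : U -> \bar R) : 0 <= esssup_on m A h.
Proof. by apply: le_ereal_inf_tmp => t []. Qed.

Lemma esssup_on_ub_ae (A : set U) (h : U -> \bar R) :
  {ae mu, forall x, A x -> h x <= esssup_on m A h}.
Proof.
suff null : m [set x | A x /\ esssup_on m A h < h x] = 0.
  have := caratheodory_null_ae null; apply: filterS => x + Ax.
  by rewrite leNgt => nlt; apply/negP => lt; apply: nlt.
pose S := [set t : \bar R | 0 <= t /\ m [set x | A x /\ t < h x] = 0].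
have := esssup_on_ge0 A h; rewrite /esssup_on -/S.
case E : (ereal_inf S) => [s| |] // _; last first.
  rewrite (_ : [set x | _] = set0) ?outer_measure0//.
  by apply/seteqP; split => x //= [_]; rewrite ltNge leey.
have /choice[t St] : forall n : nat, exists t, S t /\ t < (s + n.+1%:R^-1)%:E.
  move=> n; have : ereal_inf S < (s + n.+1%:R^-1)%:E.
    by rewrite E lte_fin ltrDl invr_gt0.
  by case/ereal_inf_lt => t ? ?; exists t.
apply/eqP; rewrite eq_le outer_measure_ge0 andbT.
apply: (le_trans (le_outer_measure m _ (\bigcup_n [set x | A x /\ t n < h x]) _)).
  move=> x [Ax]; case hx : (h x) => [y| |] // sy.
    have [n hn] : exists n, (n.+1%:R^-1 < y - s)%R.
      by apply/natSinv_lt; rewrite subr_gt0 -lte_fin.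
    exists n => //; split => //.
    by rewrite hx (lt_trans (St n).2)// lte_fin -ltrBrDl.
  exists 0%N => //; split => //.
  by rewrite hx (lt_le_trans (St 0%N).2)// leey.
apply: (le_trans (outer_measure_sigma_subadditive m _)).
by rewrite eseries0// => n _ _; case: (St n) => -[_ ->].
Qed.

End caratheodory_null.

Section metric_measurability.
Context {R : realType} {T : pointedType} {dX : T -> T -> R}.
Hypothesis hdX : is_metric dX.
Let dtri := metric_tri _ hdX.
Let dsym := dmetric_sym _ hdX.

Lemma dopen_ball x e : dopen dX [set y | dX x y < e].
Proof.
move=> y /= xy_lt; exists (e - dX x y); split; first by rewrite subr_gt0.
by move=> z /= yz_lt; apply: le_lt_trans (dtri x y z) _; rewrite -ltrBrDl.
Qed.

Lemma dopen_cballC x r : dopen dX (~` cball dX x r).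
Proof.
move=> y /negP; rewrite -ltNge => r_lt; exists (dX x y - r); split.
  by rewrite subr_gt0.
by move=> z /= yz_lt; rewrite /cball /=; have := dtri x z y; rewrite (dsym z y); lra.
Qed.

Context {m : {outer_measure set T -> \bar R}}.
Hypothesis hborel : forall A, dopen dX A -> mmeasurable m A.
Local Notation U := (caratheodory_type m).

Lemma measurable_cball x r : measurable (cball dX x r : set U).
Proof. by rewrite -(setCK (cball dX x r)); apply/measurableC/hborel/dopen_cballC. Qed.

Hypothesis hsep : separable_set dX setT.

(* With [s] dense, [d x y < t] iff for some [n] and [j] the point [x] lies in
   the open ball [B(s n, a j)] and [y] in [B(s n, t - 2 a j)]. *)
Lemma measurable_dist : measurable_fun (setT : set (U * U)) (fun z => dX z.1 z.2).
Proof.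
apply: (measurability (@RGenInftyO.G R)); first exact: RGenInftyO.measurableE.
move=> _ [_ [t ->] <-]; have [s dense_s] := hsep.
pose a j : R := j.+1%:R^-1.
have a_gt0 j : 0 < a j by rewrite invr_gt0.
rewrite (_ : _ `&` _ = \bigcup_n \bigcup_j
   (([set y | dX (s n) y < a j] : set U) `*`
    ([set y | dX (s n) y < t - 2 * a j] : set U))).
  apply: bigcupT_measurable => n; apply: bigcupT_measurable => j.
  by apply: measurableX; apply/hborel/dopen_ball.
apply/seteqP; split => [[x y] /= [_]|[x y] [n _ [j _ [/= xs ys]]]].
  rewrite in_itv /= => xy_lt.
  have [j aj] : exists j, a j * 3 < t - dX x y.
    have xy_gt0 : 0 < (t - dX x y) / 3 by apply: divr_gt0; lra.
    by have [j] := natSinv_lt xy_gt0; exists j; rewrite -ltr_pdivlMr.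
  have [n xs] := dense_s x I _ (a_gt0 j).
  exists n => //; exists j => //; split => /=; first by rewrite dsym.
  by have := dtri (s n) x y; rewrite (dsym (s n) x); lra.
split => //=; rewrite in_itv /=.
by have := dtri x (s n) y; rewrite (dsym x (s n)); have := a_gt0 j; lra.
Qed.

Hypothesis hlocfin : forall x, exists r : R, 0 < r /\ (m (cball dX x r) < +oo)%E.

(* By local finiteness, the balls [B(s n, 1/(j+1))] of finite measure cover
   [T] when [s] is dense. *)
Lemma sigma_finite_caratheodory : sigma_finite setT (m : set U -> \bar R).
Proof.
have [s dense_s] := hsep.
pose B (nj : nat * nat) : set U := cball dX (s nj.1) nj.2.+1%:R^-1.
pose F k : set U := if unpickle k is Some nj then
  [set y | B nj y /\ (m (B nj) < +oo)%E] else set0.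
exists F => [|k].
  apply/seteqP; split => // x _.
  have [r [r_gt0 mr_fin]] := hlocfin x.
  have [j jr] : exists j, j.+1%:R^-1 * 2 < r.
    have [j] := natSinv_lt (divr_gt0 r_gt0 (ltr0Sn R 1)).
    by exists j; rewrite -ltr_pdivlMr.
  have j_gt0 : 0 < j.+1%:R^-1 :> R by rewrite invr_gt0.
  have [n xs] := dense_s x I _ j_gt0.
  exists (pickle (n, j)) => //; rewrite /F pickleK /B /=; split.
    by rewrite /cball /= dsym ltW.
  apply: le_lt_trans mr_fin; apply: le_outer_measure => y; rewrite /cball /=.
  have := dtri x (s n) y; move: jr xs j_gt0; set a := j.+1%:R^-1; lra.
rewrite /F; case: (unpickle k) => [nj|]; last by split => //; rewrite outer_measure0.
have [B_fin|B_infty] := pselect (m (B nj) < +oo)%E.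
  rewrite (_ : [set y | _] = B nj); first by split => //; exact: measurable_cball.
  by apply/seteqP; split => y //= [].
rewrite (_ : [set y | _] = set0); first by split => //; rewrite outer_measure0.
by apply/seteqP; split => y //= [].
Qed.

End metric_measurability.

Section prod_null.
Context {R : realType} {T : pointedType} {m : {outer_measure set T -> \bar R}}.
Local Notation U := (caratheodory_type m).
Local Notation mu := (m : set U -> \bar R).
Local Open Scope ereal_scope.

Lemma prod_nullS (A B : set (T * T)) : A `<=` B -> prod_null m B -> prod_null m A.
Proof. by move=> AB [N [mN BN N0]]; exists N; split => //; apply: subset_trans BN. Qed.

Lemma MplusXX_representative {rho : T -> T -> \bar R} : MplusXX m rho ->
  exists g : U * U -> \bar R, [/\ measurable_fun setT g, forall z, 0 <= g z &
    prod_null m [set z | rho z.1 z.2 <> g z]].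
Proof.
move=> [rho0 [g [mg rho_g]]]; exists (fun z => maxe (g z) 0); split.
- by apply: measurable_maxe => //; exact: measurable_cst.
- by move=> z; rewrite le_max lexx orbT.
apply: prod_nullS rho_g => z /= + rhog; apply.
by rewrite -rhog max_l.
Qed.

End prod_null.

Lemma PU_exists {R : realType} {r : R} : 0 < r -> exists tau, PU r tau.
Proof.
move=> r_gt0; exists (fun k => `[r / k.+2%:R, r / k.+1%:R]%classic).
have le_k k : r / k.+2%:R <= r / k.+1%:R.
  by apply: ler_wpM2l; [exact: ltW|rewrite lef_pV2 ?posrE ?ltr0n// ler_nat].
have k1_ge1 k : 1 <= k.+1%:R :> R by rewrite ler1n.
split=> [k|t].
  split.
  - split=> [|a b c]; first by exists (r / k.+2%:R); rewrite /= in_itv /= lexx le_k.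
    rewrite /= !in_itv /= => /andP[ra _] /andP[_ br] /andP[ac cb].
    by rewrite (le_trans ra ac) (le_trans cb br).
  - move=> t; rewrite /= !in_itv /= => /andP[rt tr].
    rewrite (lt_le_trans _ rt) ?divr_gt0 ?ltr0n//=.
    by apply: le_trans tr _; rewrite ler_pdivrMr ?ltr0n//; have := k1_ge1 k; nra.
  - rewrite sup_itvcc// inf_itvcc// mulrA ler_pdivrMr ?ltr0n// mulrAC.
    rewrite ler_pdivlMr ?ltr0n// -natr1; have := k1_ge1 k; nra.
rewrite /= in_itv /= => /andP[t_gt0 tr].
have rt_ge1 : 1 <= r / t by rewrite ler_pdivlMr// mul1r.
have := truncn_itv (le_trans ler01 rt_ge1); set n := Num.truncn (r / t).
move=> /andP[n_le n_gt]; have n_gt0 : (0 < n)%N.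
  by rewrite -ltnS -(ltr_nat R) (le_lt_trans rt_ge1 n_gt).
exists n.-1 => //; rewrite /= in_itv /= prednK//; apply/andP; split.
  by rewrite ler_pdivrMr ?ltr0n// mulrC -ler_pdivrMr// ltW.
by rewrite ler_pdivlMr ?ltr0n// mulrC -ler_pdivlMr.
Qed.

Section admissible_intervals.
Context {R : realType} {r : R} {tau : nat -> set R}.
Hypothesis htau : PU r tau.

Lemma PU_sub k : tau k `<=` `]0, r].
Proof. by case: (htau.1 k). Qed.

Lemma PU_has_sup k : has_sup (tau k).
Proof.
case: (htau.1 k) => -[ne _] sub _; split => //.
by exists r => t /sub; rewrite /= in_itv /= => /andP[].
Qed.

Lemma PU_le_sup {k t} : tau k t -> t <= sup (tau k).
Proof. by move=> taut; apply: sup_upper_bound => //; exact: PU_has_sup. Qed.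

Lemma PU_half_sup_le {k t} : tau k t -> sup (tau k) / 2 <= t.
Proof.
move=> taut; case: (htau.1 k) => _ _ sup_le.
have : inf (tau k) <= t.
  by apply: ge_inf taut; exists 0 => s /PU_sub; rewrite /= in_itv /= => /andP[/ltW].
lra.
Qed.

Lemma PU_sup_itv k : 0 < sup (tau k) <= r.
Proof.
case: (htau.1 k) => -[[t taut] _] sub _; apply/andP; split.
  apply: lt_le_trans (PU_le_sup taut).
  by have := sub _ taut; rewrite /= in_itv /= => /andP[].
by apply: ge_sup => [|s /sub]; [exists t | rewrite /= in_itv /= => /andP[]].
Qed.

Lemma PU_cover t : 0 < t <= r -> exists k, tau k t.
Proof.
move=> tr; have : `]0, r]%classic t by rewrite /= in_itv.
by move/htau.2 => [k _ taut]; exists k.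
Qed.

Lemma PU_measurable k : measurable (tau k).
Proof.
apply: is_interval_measurable => a b taua taub c.
by case: (htau.1 k) => -[_ itv] _ _; exact: itv.
Qed.

End admissible_intervals.

Lemma cballS_le {R : realType} {T : Type} {dX : T -> T -> R} {E : set T} {x y s} :
  E y -> dX y x <= s -> cballS dX E s x.
Proof. by move=> Ey yx; apply: ge_ereal_inf; exists (dX y x)%:E => //; exists y. Qed.

Lemma powR_Qf_xx {R : realType} {T Y : Type} (dX : T -> T -> R) (dY : Y -> Y -> R)
  (f : T -> Y) (p : R) x : p != 0 -> (Qf dX dY f x x) `^ p = 0.
Proof. by move=> p_neq0; rewrite /Qf asboolT// powR0. Qed.

Section sigma_finite_caratheodory.
Context {R : realType} {T : pointedType} (m : {outer_measure set T -> \bar R}).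
Local Notation U := (caratheodory_type m).
Local Notation mu := (m : set U -> \bar R).
Local Open Scope ereal_scope.

Hypothesis sfin : sigma_finite setT mu.
HB.instance Definition _ := Measure_isSigmaFinite.Build _ _ _ mu sfin.

Lemma prod_null_xsection_ae {A : set (T * T)} : prod_null m A ->
  {ae mu, forall x : U, m (xsection A x) = 0}.
Proof.
case=> N [mN AN N0].
have mN1 : measurable_fun setT (mu \o xsection N) := measurable_fun_xsection mu mN.
have : \int[mu]_x `|(mu \o xsection N) x| = 0.
  rewrite -N0 /product_measure1 /cmeas; apply: eq_integral => x _.
  by rewrite gee0_abs //= outer_measure_ge0.
move/(ae_eq_integral_abs _ measurableT mN1); apply: filterS => x /(_ I) /= Nx0.
apply/eqP; rewrite eq_le outer_measure_ge0 andbT -Nx0.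
by apply: le_outer_measure => y; rewrite /xsection /= !inE; exact: AN.
Qed.

Lemma prod_null_ysection_ae {A : set (T * T)} : prod_null m A ->
  {ae mu, forall y : U, m (ysection A y) = 0}.
Proof.
case=> N [mN AN N0].
have mN2 : measurable_fun setT (mu \o ysection N) := measurable_fun_ysection mu mN.
have N0' : (mu \x^ mu) N = 0.
  rewrite -N0 /cmeas; apply/esym/product_measure_unique => // A1 A2 mA1 mA2.
  by rewrite /= product_measure2E.
have : \int[mu]_y `|(mu \o ysection N) y| = 0.
  rewrite -N0' /product_measure2; apply: eq_integral => y _.
  by rewrite gee0_abs //= outer_measure_ge0.
move/(ae_eq_integral_abs _ measurableT mN2); apply: filterS => y /(_ I) /= Ny0.
apply/eqP; rewrite eq_le outer_measure_ge0 andbT -Ny0.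
by apply: le_outer_measure => x; rewrite /ysection /= !inE; exact: AN.
Qed.

Section main_estimate.
Context {dX : T -> T -> R}.
Hypotheses (hdX : is_metric dX) (hsep : separable_set dX setT)
  (hborel : forall A, dopen dX A -> mmeasurable m A).
Context {Y : Type} {dY : Y -> Y -> R} {f : T -> Y} {p : R} (p_neq0 : p != 0%R).
Context {rho : T -> T -> \bar R} (rho_ge0 : forall x y, 0 <= rho x y).
Context {g : U * U -> \bar R} (mg : measurable_fun setT g) (g_ge0 : forall z, 0 <= g z)
  (rho_g : prod_null m [set z | rho z.1 z.2 <> g z]).
Context {E0 E : set T} (mE0 : mmeasurable m E0) (mE : mmeasurable m E)
  (EE0 : E `<=` E0).
Context {Rr : R} (hBE : cballS dX E Rr `<=` E0).
Context {G : T -> R -> \bar R}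
  (G_ge0 : forall x r, E0 x -> (0 < r <= Rr)%R -> 0 <= G x r)
  (mG : forall r, (0 < r <= Rr)%R -> measurable_fun (E0 : set U) (fun x : U => G x r)).
Context {C : R} (C_ge0 : (0 <= C)%R)
  (G_doubling : forall r, (0 < r <= Rr)%R ->
     m [set x | E0 x /\
        ~ (ereal_sup [set G x r' | r' in `[(r / 2)%R, r]] <= C%:E * G x r)] = 0).
Context {D : set (T * T)} (D_full : prod_null m ((E0 `*` E0) `\` D))
  (Qf_le_G : forall x x', D (x, x') -> E x -> cball dX x Rr x' -> x' <> x ->
     ((Qf dX dY f x x') `^ p)%:E <= G x (dX x x') + G x' (dX x x')).
Context {r : R} (hr : (0 < r <= Rr)%R).

Local Notation Qp x y := (((Qf dX dY f x y) `^ p)%:E).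

Let r_gt0 : (0 < r)%R. Proof. by case/andP: hr. Qed.
Let r_le_Rr : (r <= Rr)%R. Proof. by case/andP: hr. Qed.

Let dge0 := metric_ge0 _ hdX.
Let dsym := dmetric_sym _ hdX.

Let dX_xx x : dX x x = 0%R.
Proof. exact/(metric_eq0 _ hdX). Qed.

Let dX_gt0 {x y} : y <> x -> (0 < dX x y)%R.
Proof.
move=> yx; rewrite lt_neqAle dge0 andbT eq_sym.
by apply/eqP => /(metric_eq0 _ hdX) /esym.
Qed.

Let measurable_annulus (x : U) (A : set R) : measurable A ->
  measurable (annulus dX x A : set U).
Proof.
move=> mA; have := measurable_fun_pair2 x (measurable_dist hdX hborel hsep).
by move=> /(_ measurableT _ mA); rewrite setTI.
Qed.

Let E0_of_cball {x y} : E x -> (dX x y <= Rr)%R -> E0 y.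
Proof. by move=> Ex xy; apply: hBE; exact: cballS_le Ex xy. Qed.

Local Notation Ssup :=
  (ereal_sup [set \int[mu]_(x in E0) G x r' | r' in `]0%R, r]]).

Local Notation lhs :=
  (\int[mu]_(x in E) \int[mu]_(y in cball dX x r) (Qp x y * rho x y)).

Let Ssup_ge0 : 0 <= Ssup.
Proof.
apply: le_trans (ereal_sup_ubound _) => [|/=]; last first.
  by exists r => //; rewrite /= in_itv /= lexx r_gt0.
by apply: integral_ge0 => x E0x; exact: G_ge0.
Qed.

Section fixed_tau.
Variable tau : nat -> set R.
Hypothesis htau : PU r tau.

Let rk k := sup (tau k).

Let rk_itv k : (0 < rk k <= Rr)%R.
Proof. by have /andP[-> /le_trans ->] := PU_sup_itv htau k. Qed.

(* [G] is only known to be nonnegative and measurable on [E0]. *)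
Let Gk k : U -> \bar R := (fun x => G x (rk k)) \_ E0.

Let Gk_ge0 k x : 0 <= Gk k x.
Proof. by rewrite /Gk patchE; case: ifPn => // /set_mem E0x; exact: G_ge0. Qed.

Let measurable_Gk k : measurable_fun setT (Gk k).
Proof. exact/(measurable_restrictT _ _).1/mG/rk_itv. Qed.

Let Gk_le_Ssup k : \int[mu]_x Gk k x <= Ssup.
Proof.
rewrite /Gk -integral_mkcond; apply: ereal_sup_ubound; exists (rk k) => //.
by rewrite /= in_itv /=; exact: PU_sup_itv.
Qed.

Let doubling_at (x : U) := forall k, E0 x ->
  forall t, (rk k / 2 <= t <= rk k)%R -> G x t <= C%:E * G x (rk k).

Let doubling_ae : {ae mu, forall x, doubling_at x}.
Proof.
apply: ae_foralln => k; have := caratheodory_null_ae (G_doubling _ (rk_itv k)).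
apply: filterS => x nx E0x t t_itv.
have sup_le :
    ereal_sup [set G x r' | r' in `[(rk k / 2)%R, rk k]] <= C%:E * G x (rk k).
  by apply: contrapT => nle; apply: nx.
by apply: le_trans sup_le; apply: ereal_sup_ubound; exists t; rewrite /= ?in_itv.
Qed.

Let strip k : set (U * U) := (E `*` setT) `&` [set z | tau k (dX z.1 z.2)].

Let measurable_strip k : measurable (strip k).
Proof.
apply: measurableI; first exact: measurableX.
have := measurable_dist hdX hborel hsep measurableT _ (PU_measurable htau k).
by rewrite setTI.
Qed.

(* [w fst k] and [w snd k] are the two halves of the bound
   [Qp x y * rho x y <= C (G(x, r_k) + G(y, r_k)) rho x y] on [strip k]. *)
Let w (pi : U * U -> U) k z := (\1_(strip k) z)%:E * (Gk k (pi z) * g z).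

Let w_ge0 pi k z : 0 <= w pi k z.
Proof. by rewrite mule_ge0 ?lee_fin// mule_ge0. Qed.

Let measurable_w pi k : measurable_fun setT pi -> measurable_fun setT (w pi k).
Proof.
move=> mpi; apply: emeasurable_funM.
  by apply/measurable_EFinP; apply: measurable_indic; exact: measurable_strip.
exact: emeasurable_funM (measurableT_comp (measurable_Gk k) mpi) mg.
Qed.

Let W z := \sum_(k <oo) (w fst k z + w snd k z).

Let W_ge0 z : 0 <= W z.
Proof. by apply: nneseries_ge0 => k _ _; rewrite adde_ge0. Qed.

Let measurable_W : measurable_fun setT W.
Proof.
apply: ge0_emeasurable_sum => [k z _ _|k _]; first by rewrite adde_ge0.
by apply: emeasurable_funD; apply: measurable_w.
Qed.

Let Qp_le_Gk (x y : U) k : E x -> (dX x y <= r)%R -> y <> x -> D (x, y) ->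
  doubling_at x -> doubling_at y -> tau k (dX x y) ->
  Qp x y <= C%:E * (Gk k x + Gk k y).
Proof.
move=> Ex xy yx Dxy dbl_x dbl_y tauk.
have xy_Rr := le_trans xy r_le_Rr.
have [E0x E0y] : E0 x /\ E0 y.
  by split; [exact: EE0 | exact: E0_of_cball Ex xy_Rr].
have t_itv : (rk k / 2 <= dX x y <= rk k)%R.
  by rewrite (PU_half_sup_le htau tauk) (PU_le_sup htau tauk).
rewrite /Gk !patchE !mem_set// ge0_muleDr ?G_ge0//.
apply: le_trans (Qf_le_G _ _ Dxy Ex xy_Rr yx) _.
by apply: leeD; [exact: dbl_x | exact: dbl_y].
Qed.

Let Gk_le_W (x y : U) k : E x -> tau k (dX x y) ->
  (Gk k x + Gk k y) * g (x, y) <= W (x, y).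
Proof.
move=> Ex tauk; apply: le_trans (nneseries_ge_term k _) => [|i]; last first.
  by rewrite adde_ge0.
by rewrite /w indicE mem_set //= !mul1e ge0_muleDl.
Qed.

Let Qp_rho_le_W (x y : U) : E x -> (dX x y <= r)%R ->
  ~ ((E0 `*` E0) `\` D) (x, y) -> rho x y = g (x, y) ->
  doubling_at x -> doubling_at y -> Qp x y * rho x y <= C%:E * W (x, y).
Proof.
move=> Ex xy nD rhog dbl_x dbl_y.
have [->|yx] := pselect (y = x).
  by rewrite powR_Qf_xx// mul0e mule_ge0 ?lee_fin.
have Dxy : D (x, y).
  apply: contrapT => nDxy; apply: nD; split => //.
  by split; [exact: EE0 | exact: E0_of_cball Ex (le_trans xy r_le_Rr)].
have [k tauk] : exists k, tau k (dX x y) by apply: (PU_cover htau); rewrite dX_gt0.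
rewrite rhog; apply: le_trans (_ : C%:E * (Gk k x + Gk k y) * g (x, y) <= _).
  by apply: lee_wpmul2r => //; exact: Qp_le_Gk.
by rewrite -muleA lee_wpmul2l ?lee_fin//; exact: Gk_le_W.
Qed.

Let inner_le_W : {ae mu, forall x : U, E x ->
  \int[mu]_(y in cball dX x r) (Qp x y * rho x y) <= C%:E * \int[mu]_y W (x, y)}.
Proof.
have := prod_null_xsection_ae D_full; have := prod_null_xsection_ae rho_g.
have := doubling_ae; apply: filterS3 => x dbl_x rhog_x D_x Ex.
have mWx : measurable_fun setT (fun y => W (x, y)).
  exact: measurable_fun_pair2 x measurable_W.
apply: (@le_trans _ _ (\int[mu]_(y in cball dX x r) (C%:E * W (x, y)))).
  apply: ae_ge0_le_integral_measr.
  - exact: measurable_cball.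
  - exact/measurable_funeM/(measurable_funS _ _ mWx).
  - by move=> y _; rewrite mule_ge0 ?lee_fin ?powR_ge0.
  - by move=> y _; rewrite mule_ge0 ?lee_fin.
  have := caratheodory_null_ae D_x; have := caratheodory_null_ae rhog_x.
  have := doubling_ae; apply: filterS3 => y dbl_y rhog_y D_y xy.
  apply: Qp_rho_le_W => //.
    by move=> nD; apply: D_y; rewrite /xsection /= inE.
  by apply: contrapT => neq; apply: rhog_y; rewrite /xsection /= inE.
apply: le_trans (_ : \int[mu]_y (C%:E * W (x, y)) <= _).
  apply: ge0_subset_integral => //; first exact: measurable_cball.
    exact: measurable_funeM.
  by move=> y _; rewrite mule_ge0 ?lee_fin.
by rewrite ge0_integralZl_EFin.
Qed.

Let E_cballS k x : E x -> cballS dX E (rk k) x.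
Proof.
by move=> Ex; apply: cballS_le Ex _; rewrite dX_xx; case/andP: (rk_itv k) => /ltW.
Qed.

Let measurable_gsym (x : U) : measurable_fun setT (fun y => g (x, y) + g (y, x)).
Proof.
by apply: emeasurable_funD; [exact: measurable_fun_pair2 | exact: measurable_fun_pair1].
Qed.

Let ann k x y := (\1_(annulus dX x (tau k) : set U) y)%:E * (g (x, y) + g (y, x)).

Let ann_ge0 k x y : 0 <= ann k x y.
Proof. by rewrite mule_ge0 ?lee_fin ?adde_ge0. Qed.

Let measurable_ann k x : measurable_fun setT (ann k x).
Proof.
apply: emeasurable_funM (measurable_gsym x).
apply/measurable_EFinP; apply: measurable_indic.
by apply: measurable_annulus; exact: PU_measurable htau k.
Qed.

Let e k := esssup_on m (cballS dX E (rk k))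
  (fun x => \int[mu]_(y in annulus dX x (tau k)) (rho x y + rho y x)).

Let ann_le_e k :
  {ae mu, forall x : U, cballS dX E (rk k) x -> \int[mu]_y ann k x y <= e k}.
Proof.
have := esssup_on_ub_ae (cballS dX E (rk k) : set U)
  (fun x => \int[mu]_(y in annulus dX x (tau k)) (rho x y + rho y x)).
have := prod_null_ysection_ae rho_g; have := prod_null_xsection_ae rho_g.
apply: filterS3 => x rhog_x rhog_y ub Bx; apply: le_trans (ub Bx).
have rho_g_ae : {ae mu, forall y, annulus dX x (tau k) y ->
    g (x, y) + g (y, x) = rho x y + rho y x}.
  have := caratheodory_null_ae rhog_x; have := caratheodory_null_ae rhog_y.
  apply: filterS2 => y rhog_yx rhog_xy _.
  have -> : rho x y = g (x, y).
    by apply: contrapT => neq; apply: rhog_xy; rewrite /xsection /= inE.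
  have -> : rho y x = g (y, x).
    by apply: contrapT => neq; apply: rhog_yx; rewrite /ysection /= inE.
  by [].
have mann : measurable (annulus dX x (tau k) : set U).
  by apply: measurable_annulus; exact: PU_measurable htau k.
have mgsym : measurable_fun (annulus dX x (tau k) : set U)
    (fun y => g (x, y) + g (y, x)).
  exact: measurable_funS (measurable_gsym x).
rewrite (caratheodory_ae_eq_integral mann mgsym rho_g_ae).
rewrite [leRHS]integral_mkcond le_eqVlt; apply/orP; left; apply/eqP.
apply: eq_integral => y _; rewrite /ann indicE patchE.
by case: (y \in _) => /=; rewrite ?mul1e ?mul0e.
Qed.

Let w_section_le k x y : w fst k (x, y) + w snd k (y, x) <=
  ((\1_(cballS dX E (rk k) : set U) x)%:E * Gk k x) * ann k x y.
Proof.
have [Bx|nBx] := pselect (cballS dX E (rk k) x); last first.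
  have nS1 : ~ strip k (x, y) by move=> [[Ex _] _]; exact/nBx/E_cballS.
  have nS2 : ~ strip k (y, x).
    by move=> [[Ey _] /= tauk]; apply: nBx; exact: cballS_le Ey (PU_le_sup htau tauk).
  by rewrite /w !indicE !memNset// !mul0e adde0.
rewrite indicE mem_set// mul1e /ann.
have [tauk|ntauk] := pselect (tau k (dX x y)); last first.
  have nS1 : ~ strip k (x, y) by case.
  have nS2 : ~ strip k (y, x) by move=> [_ /=]; rewrite dsym.
  by rewrite /w !indicE !memNset// !mul0e adde0 mule_ge0// mule_ge0.
rewrite indicE mem_set// mul1e ge0_muleDr//.
by apply: leeD; rewrite /w indicE; case: (_ \in _) => /=;
  rewrite ?mul1e ?mul0e// mule_ge0.
Qed.

Let section_int_le k : {ae mu, forall x : U,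
  \int[mu]_y (w fst k (x, y) + w snd k (y, x)) <= Gk k x * e k}.
Proof.
have := ann_le_e k; apply: filterS => x ann_x.
pose B := (\1_(cballS dX E (rk k) : set U) x)%:E * Gk k x.
have B_ge0 : 0 <= B by rewrite mule_ge0 ?lee_fin.
apply: (@le_trans _ _ (\int[mu]_y (B * ann k x y))).
  apply: (ge0_le_integral mu measurableT _ _ _ (fun y _ => w_section_le k x y)).
  - by move=> y _; rewrite adde_ge0.
  - apply: emeasurable_funD.
      exact: measurable_fun_pair2 x (measurable_w fst k measurable_fst).
    exact: measurable_fun_pair1 x (measurable_w snd k measurable_snd).
  - exact: measurable_funeM (measurable_ann k x).
rewrite (ge0_integralZl _ measurableT (measurable_ann k x)) //.
rewrite /B indicE; case: (boolP (x \in _)) => [/set_mem Bx|_].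
  by rewrite mul1e lee_wpmul2l//; exact: ann_x.
by rewrite !mul0e mule_ge0// esssup_on_ge0.
Qed.

Let int_w_le k : \int[mu \x mu]_z (w fst k z + w snd k z) <= e k * Ssup.
Proof.
have mw1 := measurable_w fst k measurable_fst.
have mw2 := measurable_w snd k measurable_snd.
have w1_ge0 := w_ge0 fst k; have w2_ge0 := w_ge0 snd k.
rewrite (ge0_integralD _ measurableT (fun z _ => w1_ge0 z) mw1
  (fun z _ => w2_ge0 z) mw2).
rewrite (fubini_tonelli1 _ mw1 w1_ge0) (fubini_tonelli2 _ mw2 w2_ge0).
have mF1 := @measurable_fun_fubini_tonelli_F _ _ _ _ _ mu _ mw1 w1_ge0.
have mF2 := @measurable_fun_fubini_tonelli_G _ _ _ _ _ mu _ mw2 w2_ge0.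
have F1_ge0 x : 0 <= fubini_F mu (w fst k) x by apply: integral_ge0.
have F2_ge0 x : 0 <= fubini_G mu (w snd k) x by apply: integral_ge0.
rewrite -(ge0_integralD _ measurableT (fun x _ => F1_ge0 x) mF1
  (fun x _ => F2_ge0 x) mF2).
apply: (@le_trans _ _ (\int[mu]_x (Gk k x * e k))).
  apply: ae_ge0_le_integral => //.
  - by move=> x _; rewrite adde_ge0.
  - exact: emeasurable_funD.
  - by move=> x _; rewrite mule_ge0// esssup_on_ge0.
  - exact/emeasurable_funM/measurable_cst.
  have := section_int_le k; apply: filterS => x + _.
  rewrite /fubini_F /fubini_G -ge0_integralD//.
  - exact: measurable_fun_pair2.
  - exact: measurable_fun_pair1.
rewrite (ge0_integralZr _ measurableT) ?esssup_on_ge0// muleC.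
by rewrite lee_wpmul2l ?esssup_on_ge0 ?Gk_le_Ssup.
Qed.

Lemma punctured_mass_le_IU_tau : {ae mu, forall x : U, E x ->
  \int[mu]_y ((\1_(annulus dX x `]0%R, r]) y)%:E * g (x, y))
    <= IU_tau m dX E rho tau}.
Proof.
have := ae_foralln ann_le_e; apply: filterS => x ann_x Ex.
have mann_sum : measurable_fun setT (fun y => \sum_(k <oo) ann k x y).
  by apply: ge0_emeasurable_sum => // k _; exact: measurable_ann.
have mg_punct : measurable_fun setT
    (fun y => (\1_(annulus dX x `]0%R, r] : set U) y)%:E * g (x, y)).
  apply: emeasurable_funM; last exact: measurable_fun_pair2.
  apply/measurable_EFinP; apply: measurable_indic.
  by apply: measurable_annulus; exact: measurable_itv.
apply: (@le_trans _ _ (\int[mu]_y \sum_(k <oo) ann k x y)).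
  apply: ge0_le_integral => //; first by move=> y _; rewrite mule_ge0 ?lee_fin.
  move=> y _; rewrite indicE; case: (boolP (y \in _)) => [/set_mem xy|_].
    have [k tauk] : exists k, tau k (dX x y).
      by apply: (PU_cover htau); move: xy; rewrite /annulus /= in_itv.
    apply: le_trans (nneseries_ge_term k (fun i => ann_ge0 i x y)).
    by rewrite mul1e /ann indicE mem_set// mul1e leeDl.
  by rewrite mul0e; apply: nneseries_ge0.
rewrite integral_nneseries//; apply: lee_nneseries => [k _ _|k _].
  exact: integral_ge0.
by apply: ann_x; exact: E_cballS.
Qed.

Lemma integral_Qf_le_IU_tau : lhs <= IU_tau m dX E rho tau * (C%:E * Ssup).
Proof.
have mFW := @measurable_fun_fubini_tonelli_F _ _ _ _ _ mu _ measurable_W W_ge0.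
have FW_ge0 x : 0 <= fubini_F mu W x by apply: integral_ge0.
apply: (@le_trans _ _ (\int[mu]_(x in E) (C%:E * fubini_F mu W x))).
  apply: (ae_ge0_le_integral_measr mE _ _ _ inner_le_W).
  - apply: measurable_funeM.
    exact: (measurable_funS measurableT (@subsetT _ _) mFW).
  - by move=> x _; apply: integral_ge0 => y _; rewrite mule_ge0 ?lee_fin ?powR_ge0.
  - by move=> x _; rewrite mule_ge0 ?lee_fin//; apply: integral_ge0.
apply: (@le_trans _ _ (\int[mu]_x (C%:E * fubini_F mu W x))).
  apply: ge0_subset_integral => //; first exact: measurable_funeM.
  by move=> x _; rewrite mule_ge0 ?lee_fin.
rewrite ge0_integralZl_EFin// -fubini_tonelli1// integral_nneseries//; first last.
- by move=> k z _; rewrite adde_ge0.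
- by move=> k; apply: emeasurable_funD; apply: measurable_w.
rewrite muleCA lee_wpmul2l ?lee_fin//.
apply: (@le_trans _ _ (\sum_(k <oo) (e k * Ssup))).
  apply: lee_nneseries => [k _ _|k _]; last exact: int_w_le.
  by apply: integral_ge0 => z _; rewrite adde_ge0.
by apply: (nneseriesMr_le _ Ssup_ge0) => k; exact: esssup_on_ge0.
Qed.

End fixed_tau.

Let punctured_mass_eq0 : IU m dX E r rho = 0 -> {ae mu, forall x : U, E x ->
  \int[mu]_y ((\1_(annulus dX x `]0%R, r]) y)%:E * g (x, y)) = 0}.
Proof.
move=> IU0.
have /choice[taus htaus] n :
    exists tau, PU r tau /\ IU_tau m dX E rho tau < (n.+1%:R^-1)%:E.
  have : IU m dX E r rho < (n.+1%:R^-1)%:E by rewrite IU0 lte_fin invr_gt0.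
  by case/ereal_inf_lt => _ [tau htau <-]; exists tau.
have := ae_foralln (fun n => punctured_mass_le_IU_tau _ (htaus n).1).
apply: filterS => x mass_le Ex.
apply/eqP; rewrite eq_le integral_ge0 ?andbT; last first.
  by move=> y _; rewrite mule_ge0 ?lee_fin.
apply/lee_addgt0Pr => e e_gt0; rewrite add0e.
have [n ne] := natSinv_lt e_gt0.
by apply: le_trans (mass_le n Ex) _; apply/ltW/(lt_trans (htaus n).2); rewrite lte_fin.
Qed.

Lemma integral_Qf_le0_of_IU_eq0 : IU m dX E r rho = 0 -> lhs <= 0.
Proof.
move=> /punctured_mass_eq0 mass0.
apply: (@le_trans _ _ (\int[mu]_(x in E) cst 0 x)); last by rewrite integral0.
apply: ae_ge0_le_integral_measr => //.
- by move=> x _; apply: integral_ge0 => y _; rewrite mule_ge0 ?lee_fin ?powR_ge0.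
have := prod_null_xsection_ae rho_g; move: mass0; apply: filterS2 => x mass0 rhog_x Ex.
apply: (@le_trans _ _ (\int[mu]_(y in cball dX x r) cst 0 y)); last by rewrite integral0.
have mg_punct : measurable_fun setT
    (fun y => (\1_(annulus dX x `]0%R, r] : set U) y)%:E * g (x, y)).
  apply: emeasurable_funM; last exact: measurable_fun_pair2.
  apply/measurable_EFinP; apply: measurable_indic.
  by apply: measurable_annulus; exact: measurable_itv.
have g0_ae : ae_eq mu setT
    (fun y => (\1_(annulus dX x `]0%R, r] : set U) y)%:E * g (x, y)) (cst 0).
  apply/(ae_eq_integral_abs _ measurableT mg_punct); rewrite -(mass0 Ex).
  by apply: eq_integral => y _; rewrite gee0_abs// mule_ge0 ?lee_fin.
apply: ae_ge0_le_integral_measr => //.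
- exact: measurable_cball.
- by move=> y _; rewrite mule_ge0 ?lee_fin ?powR_ge0.
have := caratheodory_null_ae rhog_x; move: g0_ae; apply: filterS2 => y g0 rhog_y xy.
have [->|yx] := pselect (y = x); first by rewrite powR_Qf_xx// mul0e.
have rhoE : rho x y = g (x, y).
  by apply: contrapT => neq; apply: rhog_y; rewrite /xsection /= inE.
have := g0 I; rewrite indicE mem_set ?mul1e; last first.
  by rewrite /annulus /= in_itv /= dX_gt0.
by move=> gxy0; rewrite rhoE gxy0 mule0.
Qed.

Lemma integral_Qf_le_IU : lhs <= C%:E * IU m dX E r rho * Ssup.
Proof.
rewrite muleAC muleC; apply: le_ereal_inf_mul.
- by have [tau htau] := PU_exists r_gt0; exists (IU_tau m dX E rho tau), tau.
- by move=> _ [tau _ <-]; apply: nneseries_ge0 => k _ _; exact: esssup_on_ge0.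
- by rewrite mule_ge0 ?lee_fin ?Ssup_ge0.
- by move=> _ [tau htau <-]; exact: integral_Qf_le_IU_tau htau.
- exact: integral_Qf_le0_of_IU_eq0.
Qed.

End main_estimate.

End sigma_finite_caratheodory.

Theorem proposition3p6
  (R : realType) (T : pointedType) (dX : T -> T -> R)
  (m : {outer_measure set T -> \bar R})
  (* standing assumptions on (X, d, m) *)
  (hdX : is_metric dX) (hsep : separable_set dX setT)
  (hlc : locally_complete dX) (hdiam : positive_diameter dX)
  (hborel : forall U, dopen dX U -> mmeasurable m U)
  (hlocfin : forall x, exists r : R, 0 < r /\ (m (cball dX x r) < +oo)%E)
  (hmpos : (0 < m setT)%E)
  (* data *)
  (p : R) (hp : 1 <= p)
  (rho : T -> T -> \bar R) (hrho : MplusXX m rho)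
  (E0 : set T) (hE0 : mmeasurable m E0)
  (Y : Type) (dY : Y -> Y -> R) (hdY : is_metric dY)
  (f : T -> Y) (hf : Mmaps m dY E0 f)
  (E : set T) (hE : mmeasurable m E) (hEE0 : relcompact_in dX E E0)
  (Rr : R) (hRr : 0 < Rr) (hBE : cballS dX E Rr `<=` E0)
  (G : T -> R -> \bar R)
  (hG0 : forall (x : T) (r : R), E0 x -> 0 < r <= Rr -> (0 <= G x r)%E)
  (hGi : forall r : R, 0 < r <= Rr ->
     measurable_fun (E0 : set (caratheodory_type m))
       (fun x : caratheodory_type m => G x r))
  (C : R) (hC : 0 < C)
  (hGii : forall r : R, 0 < r <= Rr ->
     m [set x | E0 x /\
        ~ (ereal_sup [set G x r' | r' in `[(r / 2)%R, r%R]] <= C%:E * G x r)%E]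
     = 0%E)
  (hGiii : exists D : set (T * T),
     [/\ D `<=` E0 `*` E0, prod_null m ((E0 `*` E0) `\` D) &
         forall x x', D (x, x') -> E x -> cball dX x Rr x' -> x' <> x ->
           (((Qf dX dY f x x') `^ p)%:E <= G x (dX x x') + G x' (dX x x'))%E]) :
  forall r : R, 0 < r <= Rr ->
    (\int[cmeas m]_(x in E)
        \int[cmeas m]_(x' in cball dX x r) (((Qf dX dY f x x') `^ p)%:E * rho x x')
     <= C%:E * IU m dX E r rho *
        ereal_sup [set \int[cmeas m]_(x in E0) G x r' | r' in `]0%R, r%R]])%E.
Proof.
move=> r hr.
have sfin := sigma_finite_caratheodory hdX hborel hsep hlocfin.
have [g [mg g_ge0 rho_g]] := MplusXX_representative hrho.
have [D [_ D_full Qf_le_G]] := hGiii.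
have p_neq0 : p != 0 by rewrite gt_eqF// (lt_le_trans ltr01 hp).
exact: (integral_Qf_le_IU m sfin hdX hsep hborel p_neq0 hrho.1 mg g_ge0 rho_g
  hE0 hE hEE0.1 hBE hG0 hGi (ltW hC) hGii D_full Qf_le_G hr).
Qed.
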